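(* Let $X$ be a finite-dimensional simplicial complex satisfying: (1) for all vertices $x,y$ of $X$, $\Sigma_x\subseteq\Sigma_y$ implies $x=y$; (2) if $K$ is a simplex of $X$ and $x$ is a vertex of $X$ with $x\notin K$, then there is a maximal simplex $L$ of $X$ with $K\subseteq L$ and $x\notin L$. Then $\mathrm{Aut}(X)$ is isomorphic to $\mathrm{Aut}(\mathcal{N}(X))$.
   Context: For a vertex $x$ of $X$, $\Sigma_x$ is the collection of maximal simplices of $X$ containing $x$. $\mathcal{N}(X)$ is the nerve of the collection of maximal simplices of $X$: its vertices are the maximal simplices of $X$, and a finite set of them is a simplex iff their common intersection is non-empty. $\mathrm{Aut}$ denotes the group of simplicial automorphisms. *)

From Stdlib Require Import List.
Set Implicit Arguments.

Definition subset {V : Type} (A B : V -> Prop) : Prop := forall x, A x -> B x.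

Definition finite_set {V : Type} (A : V -> Prop) : Prop :=
  exists l : list V, forall x, A x <-> In x l.

Definition is_simplicial_complex {V : Type} (S : (V -> Prop) -> Prop) : Prop :=
  (forall A, S A -> finite_set A /\ exists x, A x) /\
  (forall A B, S A -> subset B A -> (exists x, B x) -> S B) /\
  (forall x : V, S (fun y => y = x)).

Definition finite_dimensional {V : Type} (S : (V -> Prop) -> Prop) : Prop :=
  exists n : nat, forall A (l : list V),
    S A -> NoDup l -> (forall x, In x l -> A x) -> length l <= n.

Definition maximal_simplex {V : Type} (S : (V -> Prop) -> Prop) (A : V -> Prop) : Prop :=
  S A /\ forall B, S B -> subset A B -> subset B A.

Definition Sigma_sub {V : Type} (S : (V -> Prop) -> Prop) (x y : V) : Prop :=
  forall A, maximal_simplex S A -> A x -> A y.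

Definition MaxSimp {V : Type} (S : (V -> Prop) -> Prop) : Type :=
  { A : V -> Prop | maximal_simplex S A }.

Definition nerve {V : Type} (S : (V -> Prop) -> Prop) : (MaxSimp S -> Prop) -> Prop :=
  fun F => finite_set F /\ (exists A, F A) /\
           exists x : V, forall A : MaxSimp S, F A -> proj1_sig A x.

Definition image {V : Type} (f : V -> V) (A : V -> Prop) : V -> Prop :=
  fun y => exists x, A x /\ f x = y.

Definition is_aut {V : Type} (S : (V -> Prop) -> Prop) (f : V -> V) : Prop :=
  (forall x y, f x = f y -> x = y) /\ (forall y, exists x, f x = y) /\
  (forall A, S A <-> S (image f A)).

Definition aut_groups_isomorphic {V W : Type}
  (S : (V -> Prop) -> Prop) (T : (W -> Prop) -> Prop) : Prop :=
  exists Phi : (V -> V) -> (W -> W),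
    (forall f, is_aut S f -> is_aut T (Phi f)) /\
    (forall f g, is_aut S f -> is_aut S g ->
       Phi (fun x => f (g x)) = (fun y => Phi f (Phi g y))) /\
    (forall f g, is_aut S f -> is_aut S g -> Phi f = Phi g -> f = g) /\
    (forall h, is_aut T h -> exists f, is_aut S f /\ Phi f = h).

From Stdlib Require Import List Lia Wf_nat Classical ClassicalEpsilon
  FunctionalExtensionality PropExtensionality ProofIrrelevance.

(* An automorphism f of X permutes the maximal simplices, hence induces an
   automorphism of N(X); f is recovered from it because, by condition (1),
   a vertex x is determined by its star Sigma_x.  Conversely, the stars are
   exactly the maximal families of maximal simplices all of whose finite
   subfamilies have a common vertex: such a family has a common vertex
   outright, since its members are finite.  An automorphism h of N(X)
   permutes these families, so it permutes the vertices of X, and the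
   resulting bijection f is simplicial because the simplices of X are the
   nonempty finite subsets of its maximal simplices (finite dimension). *)

Lemma pred_ext {T : Type} (A B : T -> Prop) : (forall x, A x <-> B x) -> A = B.
Proof.
  intro H. apply functional_extensionality; intro x. apply propositional_extensionality, H.
Qed.

Lemma list_choice {A B : Type} (R : A -> B -> Prop) (c : list A) :
  (forall x, In x c -> exists y, R x y) ->
  exists l, (forall x, In x c -> exists y, In y l /\ R x y) /\
            (forall y, In y l -> exists x, In x c /\ R x y).
Proof.
  induction c as [|x c IH]; intro Hc.
  - exists nil. split; intros _ [].
  - destruct IH as [l [Hl Hl']]; [intros z Hz; apply Hc; right; exact Hz|].
    destruct (Hc x (or_introl eq_refl)) as [y Hy].
    exists (y :: l). split.
    + intros z [<-|Hz]; [exists y; split; [left|]; auto|].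
      destruct (Hl z Hz) as [w [Hw Rw]]. exists w. split; [right|]; auto.
    + intros w [<-|Hw]; [exists x; split; [left|]; auto|].
      destruct (Hl' w Hw) as [z [Hz Rz]]. exists z. split; [right|]; auto.
Qed.

Lemma bounded_nat_has_greatest (P : nat -> Prop) (n : nat) :
  (exists k, P k) -> (forall k, P k -> k <= n) ->
  exists k, P k /\ forall j, P j -> j <= k.
Proof.
  intros [k0 Pk0] bound.
  destruct (dec_inh_nat_subset_has_unique_least_element (fun m => P (n - m)))
    as [m [[Pm least] _]].
  - intro m. apply classic.
  - exists (n - k0). replace (n - (n - k0)) with k0 by (specialize (bound k0 Pk0); lia).
    exact Pk0.
  - exists (n - m). split; [exact Pm|]. intros j Pj.
    pose proof (bound j Pj).
    assert (m <= n - j) by (apply least; replace (n - (n - j)) with j by lia; exact Pj).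
    lia.
Qed.

Lemma image_comp {T : Type} (f g : T -> T) (A : T -> Prop) :
  image (fun x => f (g x)) A = image f (image g A).
Proof.
  apply pred_ext. intro y. split.
  - intros [x [Ax <-]]. exists (g x). split; [exists x; auto|reflexivity].
  - intros [z [[x [Ax <-]] <-]]. exists x. auto.
Qed.

Lemma finite_set_image {T : Type} (h : T -> T) (A : T -> Prop) :
  finite_set A -> finite_set (image h A).
Proof.
  intros [l Hl]. exists (map h l). intro y. rewrite in_map_iff.
  split; intros [x [H1 H2]]; exists x; split; try apply Hl; auto.
Qed.

Section Bijections.

Context {T : Type} (h : T -> T).
Hypothesis h_inj : forall x y, h x = h y -> x = y.
Hypothesis h_surj : forall y, exists x, h x = y.

Lemma image_preimage (A : T -> Prop) : image h (fun x => A (h x)) = A.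
Proof.
  apply pred_ext. intro y. split.
  - intros [x [Ax <-]]. exact Ax.
  - intro Ay. destruct (h_surj y) as [x <-]. exists x. split; [exact Ay|reflexivity].
Qed.

Lemma image_apply_iff (A : T -> Prop) (x : T) : image h A (h x) <-> A x.
Proof.
  split.
  - intros [z [Az E]]. apply h_inj in E. subst. exact Az.
  - intro Ax. exists x. split; [exact Ax|reflexivity].
Qed.

Lemma finite_set_preimage (A : T -> Prop) :
  (forall y, A y -> exists x, h x = y) -> finite_set A -> finite_set (fun x => A (h x)).
Proof.
  intros A_range [l Hl].
  destruct (list_choice (fun y x => h x = y) l) as [l' [Hl' Hl'']].
  { intros y Hy. apply A_range, Hl, Hy. }
  exists l'. intro x. split.
  - intro Ahx. destruct (Hl' (h x) (proj1 (Hl _) Ahx)) as [x' [Hx' E]].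
    apply h_inj in E. subst. exact Hx'.
  - intro Hx. destruct (Hl'' x Hx) as [y [Hy <-]]. apply Hl, Hy.
Qed.

Lemma finite_set_image_iff (A : T -> Prop) : finite_set (image h A) <-> finite_set A.
Proof.
  split; [|apply finite_set_image].
  intro Hfin. replace A with (fun x => image h A (h x)).
  - apply finite_set_preimage; [|exact Hfin]. intros y [x [_ <-]]. exists x. reflexivity.
  - apply pred_ext. intro x. apply image_apply_iff.
Qed.

End Bijections.

(* Stars Sigma_x may be infinite, so they need not be simplices of N(X); they
   are its maximal locally simplex families instead. *)
Definition locally_simplex {T : Type} (P : (T -> Prop) -> Prop) (F : T -> Prop) : Prop :=
  forall G, subset G F -> finite_set G -> (exists x, G x) -> P G.

Section Automorphisms.

Context {T : Type} (P : (T -> Prop) -> Prop).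

Lemma is_aut_comp (f g : T -> T) :
  is_aut P f -> is_aut P g -> is_aut P (fun x => f (g x)).
Proof.
  intros [fi [fs fP]] [gi [gs gP]]. split; [|split].
  - intros x y E. apply gi, fi, E.
  - intro y. destruct (fs y) as [z <-]. destruct (gs z) as [x <-]. exists x. reflexivity.
  - intro A. rewrite image_comp, (gP A). apply fP.
Qed.

Variable h : T -> T.
Hypothesis h_aut : is_aut P h.

Lemma aut_preimage_iff (A : T -> Prop) : P (fun x => A (h x)) <-> P A.
Proof.
  destruct h_aut as [_ [hs hP]]. rewrite (hP (fun x => A (h x))), (image_preimage h hs). reflexivity.
Qed.

Lemma maximal_simplex_image_iff (A : T -> Prop) :
  maximal_simplex P (image h A) <-> maximal_simplex P A.
Proof.
  destruct h_aut as [hi [hs hP]]. split.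
  - intros [PhA maxhA]. split; [apply (proj2 (hP A)), PhA|].
    intros B PB AB x Bx.
    apply (image_apply_iff h hi), (maxhA (image h B)); [apply (proj1 (hP B)), PB| |apply image_apply_iff; auto].
    intros y [z [Az <-]]. exists z. auto.
  - intros [PA maxA]. split; [apply (proj1 (hP A)), PA|].
    intros B PB hAB y By. destruct (hs y) as [x <-]. exists x. split; [|reflexivity].
    apply (maxA (fun x => B (h x))); [apply aut_preimage_iff, PB| |exact By].
    intros z Az. apply hAB. exists z. auto.
Qed.

Lemma maximal_simplex_preimage_iff (A : T -> Prop) :
  maximal_simplex P (fun x => A (h x)) <-> maximal_simplex P A.
Proof.
  rewrite <- maximal_simplex_image_iff, (image_preimage h (proj1 (proj2 h_aut))).
  reflexivity.
Qed.

Lemma is_aut_locally_simplex : is_aut (locally_simplex P) h.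
Proof.
  destruct h_aut as [hi [hs hP]]. split; [exact hi|split; [exact hs|]].
  intro F. split.
  - intros HF G GF Gfin [y Gy].
    rewrite <- (image_preimage h hs G). apply (proj1 (hP _)), HF.
    + intros x Gx. apply (image_apply_iff h hi), GF, Gx.
    + apply (finite_set_preimage h hi); [intros z _; apply hs|exact Gfin].
    + destruct (hs y) as [x <-]. exists x. exact Gy.
  - intros HhF G GF Gfin [x Gx]. apply (proj2 (hP G)), HhF.
    + intros y [z [Gz <-]]. exists z. split; [apply GF, Gz|reflexivity].
    + apply finite_set_image, Gfin.
    + exists (h x), x. split; [exact Gx|reflexivity].
Qed.

End Automorphisms.

Section Nerve.

Context {V : Type} (S : (V -> Prop) -> Prop).
Hypothesis HX : is_simplicial_complex S.
Hypothesis Hdim : finite_dimensional S.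
Hypothesis Hsigma : forall x y : V, Sigma_sub S x y -> x = y.

Lemma maximal_simplex_ext (M N : MaxSimp S) : proj1_sig M = proj1_sig N -> M = N.
Proof. apply eq_sig_hprop. intros. apply proof_irrelevance. Qed.

Lemma simplex_sub_maximal (A : V -> Prop) :
  S A -> exists M, maximal_simplex S M /\ subset A M.
Proof.
  intro SA. destruct Hdim as [n Hn].
  set (spans k := exists B, S B /\ subset A B /\
                  exists l, NoDup l /\ length l = k /\ forall x, In x l -> B x).
  destruct (bounded_nat_has_greatest spans n) as [k [[B [SB [AB [l [Nl [<- Bl]]]]]] greatest]].
  - exists 0, A. split; [exact SA|split; [intros x Ax; exact Ax|]].
    exists nil. split; [constructor|split; [reflexivity|intros x []]].
  - intros k [B [SB [_ [l [Nl [<- Bl]]]]]]. apply (Hn B l); assumption.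
  - exists B. split; [split; [exact SB|]|exact AB].
    intros C SC BC z Cz. apply NNPP. intro nBz.
    assert (spans (length (z :: l))) as Hlonger.
    { exists C. split; [exact SC|]. split; [intros x Ax; apply BC, AB, Ax|].
      exists (z :: l). split; [|split; [reflexivity|]].
      - constructor; [intro Hz; apply nBz, Bl, Hz|exact Nl].
      - intros x [<-|Hx]; [exact Cz|apply BC, Bl, Hx]. }
    apply greatest in Hlonger. simpl in Hlonger. lia.
Qed.

Lemma simplex_iff_sub_maximal (A : V -> Prop) :
  S A <-> finite_set A /\ (exists x, A x) /\ exists M : MaxSimp S, subset A (proj1_sig M).
Proof.
  destruct HX as [Hfin [Hface _]]. split.
  - intro SA. destruct (Hfin A SA) as [fin ne]. split; [exact fin|split; [exact ne|]].
    destruct (simplex_sub_maximal A SA) as [M [HM AM]]. exists (exist _ M HM). exact AM.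
  - intros [_ [ne [M AM]]]. apply (Hface (proj1_sig M)); [apply (proj2_sig M)|exact AM|exact ne].
Qed.

Definition star (x : V) : MaxSimp S -> Prop := fun M => proj1_sig M x.

Lemma star_nonempty (x : V) : exists M, star x M.
Proof.
  destruct (simplex_sub_maximal _ (proj2 (proj2 HX) x)) as [M [HM sub]].
  exists (exist _ M HM). apply sub. reflexivity.
Qed.

Lemma star_subset_eq (x y : V) : subset (star x) (star y) -> x = y.
Proof. intro sub. apply Hsigma. intros A HA. exact (sub (exist _ A HA)). Qed.

Lemma locally_simplex_star (x : V) : locally_simplex (@nerve V S) (star x).
Proof. intros G sub fin ne. repeat split; auto. exists x. exact sub. Qed.

Lemma locally_simplex_common_vertex (F : MaxSimp S -> Prop) (M0 : MaxSimp S) :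
  locally_simplex (@nerve V S) F -> F M0 -> exists y, subset F (star y).
Proof.
  intros HF F0. apply NNPP. intro no_common.
  destruct (proj1 HX _ (proj1 (proj2_sig M0))) as [[c Hc] _].
  assert (avoid : forall x, In x c -> exists M, F M /\ ~ proj1_sig M x).
  { intros x _. apply NNPP. intro all. apply no_common. exists x.
    intros M FM. apply NNPP. intro nMx. apply all. exists M. auto. }
  destruct (list_choice _ c avoid) as [l [Hl Hl']].
  destruct (HF (fun M => M0 = M \/ In M l)) as [_ [_ [y Hy]]].
  - intros M [<-|HM]; [exact F0|]. destruct (Hl' M HM) as [x [_ [FM _]]]. exact FM.
  - exists (M0 :: l). reflexivity.
  - exists M0. left. reflexivity.
  - destruct (Hl y) as [M [HM [_ nMy]]]; [apply Hc, Hy; left; reflexivity|].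
    apply nMy, Hy. right. exact HM.
Qed.

Lemma maximal_locally_simplex_star (x : V) :
  maximal_simplex (locally_simplex (@nerve V S)) (star x).
Proof.
  split; [apply locally_simplex_star|].
  intros G HG sub M GM. destruct (star_nonempty x) as [M0 HM0].
  destruct (locally_simplex_common_vertex G M0 HG (sub _ HM0)) as [y Hy].
  replace x with y; [exact (Hy M GM)|].
  symmetry. apply star_subset_eq. intros N HN. apply Hy, sub, HN.
Qed.

Lemma maximal_locally_simplex_eq_star (F : MaxSimp S -> Prop) (M0 : MaxSimp S) :
  maximal_simplex (locally_simplex (@nerve V S)) F -> F M0 -> exists y, F = star y.
Proof.
  intros [HF maxF] F0. destruct (locally_simplex_common_vertex F M0 HF F0) as [y Hy].
  exists y. apply pred_ext. intro M. split; [apply Hy|].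
  apply (maxF _ (locally_simplex_star y) Hy).
Qed.

(* The fallback [M] is never used when [f] is an automorphism. *)
Definition nerve_map (f : V -> V) (M : MaxSimp S) : MaxSimp S :=
  match excluded_middle_informative (maximal_simplex S (image f (proj1_sig M))) with
  | left H => exist _ _ H
  | right _ => M
  end.

Lemma nerve_map_val (f : V -> V) (M : MaxSimp S) :
  is_aut S f -> proj1_sig (nerve_map f M) = image f (proj1_sig M).
Proof.
  intro Hf. unfold nerve_map.
  destruct (excluded_middle_informative _) as [max|not_max]; [reflexivity|].
  exfalso. apply not_max, maximal_simplex_image_iff, proj2_sig; exact Hf.
Qed.

Definition induces (f : V -> V) (h : MaxSimp S -> MaxSimp S) : Prop :=
  forall M x, proj1_sig (h M) (f x) <-> proj1_sig M x.

Lemma induces_nerve_map (f : V -> V) : is_aut S f -> induces f (nerve_map f).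
Proof.
  intros Hf M x. rewrite nerve_map_val by exact Hf. apply image_apply_iff, Hf.
Qed.

Lemma induces_comp f g h k :
  induces f h -> induces g k -> induces (fun x => f (g x)) (fun M => h (k M)).
Proof. intros Hfh Hgk M x. etransitivity; [apply Hfh|apply Hgk]. Qed.

Lemma induces_vertex_unique f g h :
  induces f h -> induces g h -> (forall N, exists M, h M = N) -> f = g.
Proof.
  intros Hf Hg hs. apply functional_extensionality. intro x.
  apply star_subset_eq. intros N HN. destruct (hs N) as [M <-].
  apply Hg, Hf, HN.
Qed.

Lemma induces_nerve_unique f h k :
  induces f h -> induces f k -> (forall y, exists x, f x = y) -> h = k.
Proof.
  intros Hh Hk fs. apply functional_extensionality. intro M.
  apply maximal_simplex_ext, pred_ext. intro y. destruct (fs y) as [x <-].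
  etransitivity; [apply Hh|symmetry; apply Hk].
Qed.

Lemma nerve_image_iff f h (F : MaxSimp S -> Prop) :
  induces f h -> (forall y, exists x, f x = y) -> (forall M N, h M = h N -> M = N) ->
  @nerve V S F <-> @nerve V S (image h F).
Proof.
  intros Hind fs hi. unfold nerve. rewrite (finite_set_image_iff h hi). split.
  - intros [fin [[M0 F0] [x Hx]]]. split; [exact fin|split; [exists (h M0), M0; auto|]].
    exists (f x). intros N [M [FM <-]]. apply Hind, Hx, FM.
  - intros [fin [[N0 [M0 [F0 _]]] [y Hy]]]. split; [exact fin|split; [exists M0; exact F0|]].
    destruct (fs y) as [x <-]. exists x. intros M FM.
    apply Hind, Hy. exists M. split; [exact FM|reflexivity].
Qed.

Lemma is_aut_nerve_map (f : V -> V) : is_aut S f -> is_aut (@nerve V S) (nerve_map f).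
Proof.
  intro Hf. pose proof (induces_nerve_map f Hf) as Hind.
  assert (inj : forall M N, nerve_map f M = nerve_map f N -> M = N).
  { intros M N E. apply maximal_simplex_ext, pred_ext. intro x.
    rewrite <- (Hind M x), <- (Hind N x), E. reflexivity. }
  split; [exact inj|split].
  - intro N.
    pose proof (proj2 (maximal_simplex_preimage_iff S f Hf _) (proj2_sig N)) as HM.
    exists (exist _ _ HM). apply maximal_simplex_ext.
    rewrite nerve_map_val by exact Hf. simpl. apply image_preimage, Hf.
  - intro F. apply (nerve_image_iff f); [exact Hind|apply Hf|exact inj].
Qed.

Section InducedVertexMap.

Variable h : MaxSimp S -> MaxSimp S.
Hypothesis h_aut : is_aut (@nerve V S) h.

Lemma exists_inducing : exists f, induces f h.
Proof.
  destruct h_aut as [hi [hs _]].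
  assert (star_image : forall x, exists y, image h (star x) = star y).
  { intro x. destruct (star_nonempty x) as [M0 HM0].
    apply (maximal_locally_simplex_eq_star _ (h M0)); [|exists M0; auto].
    apply (maximal_simplex_image_iff _ h); [apply is_aut_locally_simplex, h_aut|].
    apply maximal_locally_simplex_star. }
  destruct (choice _ star_image) as [f Hf]. exists f.
  intros M x. change (star (f x) (h M) <-> star x M). rewrite <- Hf.
  apply image_apply_iff, hi.
Qed.

Variable f : V -> V.
Hypothesis f_induces : induces f h.

Lemma induced_inj : forall x y, f x = f y -> x = y.
Proof.
  intros x y E. apply star_subset_eq. intros M Mx.
  apply f_induces. rewrite <- E. apply f_induces, Mx.
Qed.

Lemma induced_surj : forall y, exists x, f x = y.
Proof.
  destruct h_aut as [_ [hs _]]. intro y.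
  destruct (star_nonempty y) as [N HN]. destruct (hs N) as [M0 <-].
  destruct (maximal_locally_simplex_eq_star (fun M => star y (h M)) M0) as [x Ex];
    [|exact HN|].
  { apply (maximal_simplex_preimage_iff _ h); [apply is_aut_locally_simplex, h_aut|].
    apply maximal_locally_simplex_star. }
  exists x. apply star_subset_eq. intros N' HN'. destruct (hs N') as [M <-].
  change ((fun M => star y (h M)) M). rewrite Ex. apply f_induces, HN'.
Qed.

Lemma induced_is_aut : is_aut S f.
Proof.
  destruct h_aut as [hi [hs _]].
  split; [exact induced_inj|split; [exact induced_surj|]].
  intro A. rewrite !simplex_iff_sub_maximal, (finite_set_image_iff f induced_inj).
  split; intros [fin [[x0 Hx0] [M AM]]]; split; try exact fin.
  - split; [exists (f x0), x0; auto|].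
    exists (h M). intros y [x [Ax <-]]. apply f_induces, AM, Ax.
  - destruct Hx0 as [x0' [Hx0' _]]. split; [exists x0'; exact Hx0'|].
    destruct (hs M) as [M' <-]. exists M'. intros x Ax.
    apply f_induces, AM. exists x. auto.
Qed.

End InducedVertexMap.

End Nerve.

Theorem theorem3p2 (V : Type) (S : (V -> Prop) -> Prop)
  (HX : is_simplicial_complex S)
  (Hdim : finite_dimensional S)
  (H1 : forall x y : V, Sigma_sub S x y -> x = y)
  (H2 : forall (K : V -> Prop) (x : V), S K -> ~ K x ->
          exists L, maximal_simplex S L /\ subset K L /\ ~ L x) :
  aut_groups_isomorphic S (@nerve V S).
Proof.
  exists (nerve_map S). split; [|split; [|split]].
  - apply is_aut_nerve_map.
  - intros f g Hf Hg. pose proof (is_aut_comp S f g Hf Hg) as Hfg.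
    apply (induces_nerve_unique S (fun x => f (g x))).
    + apply induces_nerve_map, Hfg.
    + apply induces_comp; apply induces_nerve_map; assumption.
    + apply Hfg.
  - intros f g Hf Hg E. apply (induces_vertex_unique S H1 f g (nerve_map S f)).
    + apply induces_nerve_map, Hf.
    + rewrite E. apply induces_nerve_map, Hg.
    + apply is_aut_nerve_map, Hf.
  - intros h Hh. destruct (exists_inducing S HX Hdim H1 h Hh) as [f Hf].
    pose proof (induced_is_aut S HX Hdim H1 h Hh f Hf) as Hfaut.
    exists f. split; [exact Hfaut|].
    apply (induces_nerve_unique S f); [apply induces_nerve_map, Hfaut|exact Hf|apply Hfaut].
Qed.
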